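(* If $q$ is a prime power, then there exists a $(q,q^2+1;8)$-bipartite biregular graph of order $(q^2+q+1)(q^3-q)$.
   Context: For integers $a,b\geq 2$ and even $g\ge4$, an $(a,b;g)$-bipartite biregular graph is a finite simple bipartite graph of girth exactly $g$ in which all vertices of one bipartition class have degree $a$ and all vertices of the other class have degree $b$. *)

From mathcomp Require Import all_boot.
Set Implicit Arguments. Unset Strict Implicit. Unset Printing Implicit Defensive.

Definition simple_graph (V : finType) (e : rel V) : Prop :=
  symmetric e /\ irreflexive e.

Definition deg (V : finType) (e : rel V) (x : V) : nat := #|[set y | e x y]|.

Definition is_cycle (V : finType) (e : rel V) (c : seq V) : Prop :=
  3 <= size c /\ ucycle e c.

Definition has_girth (V : finType) (e : rel V) (g : nat) : Prop :=
  (exists c, is_cycle e c /\ size c = g) /\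
  (forall c, is_cycle e c -> g <= size c).

Definition bipartite_biregular (V : finType) (e : rel V) (a b g : nat) : Prop :=
  simple_graph e /\
  exists A : {set V},
    (forall x y, e x y -> (x \in A) != (y \in A)) /\
    (forall x, x \in A -> deg e x = a) /\
    (forall x, x \notin A -> deg e x = b) /\
    has_girth e g.

Definition prime_power (q : nat) : Prop :=
  exists p k, prime p /\ 0 < k /\ q = p ^ k.

(* Let O be the elliptic quadric x0 x3 = N(x1, x2) in the hyperplane at infinity
   of AG(4, q), where N(u, v) = u^2 + uv + cv^2 is anisotropic, and T_3(O) Tits'
   generalized quadrangle of order (q, q^2).  Its incidence graph has girth 8:
   two points lie on at most one line, and there are no triangles because no
   three points of O are collinear (the quadratic form x0 x3 - N(x1, x2) vanishes
   on a sum of two isotropic vectors only if they are proportional).  Now remove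
   the special point of T_3(O), the affine points and lines inside the hyperplane
   x2 = 0, the points of O in that hyperplane and the hyperplanes tangent to O at
   them.  Every remaining point keeps its q^2 + 1 lines, every remaining line
   loses exactly one of its q + 1 points, an affine parallelogram still gives an
   8-cycle, and (q^2 + q + 1)(q^3 - q) elements remain. *)

From mathcomp Require Import all_boot all_algebra finfield.
From mathcomp Require Import ring zify.
Set Implicit Arguments. Unset Strict Implicit. Unset Printing Implicit Defensive.
Import GRing.Theory.

Lemma deg_param (V I : finType) (e : rel V) x (f : I -> V) : injective f ->
  (forall i, e x (f i)) -> (forall y, e x y -> exists i, y = f i) -> deg e x = #|I|.
Proof.
move=> f_inj eWf fWe; rewrite /deg -cardsT -(card_imset _ f_inj); apply: eq_card => y.
by rewrite inE; apply/idP/imsetP => [/fWe[i ->]|[i _ ->]]; first exists i.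
Qed.

Section IncidenceGraph.
Variables (P L : eqType) (inc : P -> L -> bool).

Definition incg : rel (P + L) := fun x y =>
  match x, y with
  | inl p, inr l | inr l, inl p => inc p l
  | _, _ => false
  end.

Definition is_point (x : P + L) : bool := if x is inl _ then true else false.

Definition triangle P1 P2 P3 L1 L2 L3 : Prop :=
  [/\ [&& P1 != P2, P2 != P3 & P3 != P1], [&& L1 != L2, L2 != L3 & L3 != L1],
      inc P1 L1 && inc P2 L1, inc P2 L2 && inc P3 L2 & inc P3 L3 && inc P1 L3].

Lemma triangle_rot P1 P2 P3 L1 L2 L3 :
  triangle P1 P2 P3 L1 L2 L3 -> triangle P2 P3 P1 L2 L3 L1.
Proof. by case=> /and3P[? ? ?] /and3P[? ? ?] *; split; try apply/and3P. Qed.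

Lemma incg_sym : symmetric incg.
Proof. by case=> ? [] ?. Qed.

Lemma incg_irr : irreflexive incg.
Proof. by case. Qed.

Lemma incg_is_point x y : incg x y -> is_point y = ~~ is_point x.
Proof. by case: x => ?; case: y. Qed.

Lemma path_incg_is_point x s :
  path incg x s -> is_point (last x s) = is_point x (+) odd (size s).
Proof.
elim: s x => [|y s IH] x /=; first by rewrite addbF.
by case/andP=> /incg_is_point xy /IH ->; rewrite xy addNb addbN.
Qed.

Lemma cycle_incg_even s : cycle incg s -> ~~ odd (size s).
Proof.
case: s => [|x s] //=; rewrite rcons_path => /andP[/path_incg_is_point ip /incg_is_point].
by rewrite ip; case: (is_point x); case: (odd (size s)).
Qed.

Hypothesis line_unique : forall P1 P2 L1 L2, P1 != P2 ->
  inc P1 L1 -> inc P2 L1 -> inc P1 L2 -> inc P2 L2 -> L1 = L2.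
Hypothesis triangle_free : forall P1 P2 P3 L1 L2 L3, ~ triangle P1 P2 P3 L1 L2 L3.

Lemma incg_no_4cycle x1 x2 x3 x4 : ~ ucycle incg [:: x1; x2; x3; x4].
Proof.
suff pt_first P1 y2 y3 y4 : ~ ucycle incg [:: inl P1; y2; y3; y4].
  case: x1 x2 => [P1|L1] [P2|L2]; try exact: pt_first; last by rewrite /ucycle /=.
  by rewrite -(rot_ucycle 1) /=; apply: pt_first.
case: y2 y3 y4 => [?|L2] [P3|?] [?|L4]; rewrite /ucycle /= ?inE -?sum_eqE /= ?orbF ?andbF //.
case/and4P=> /and5P[i12 i32 i34 i14 _] n13 /eqP[].
exact: line_unique n13 i12 i32 i14 i34.
Qed.

Lemma incg_no_6cycle x1 x2 x3 x4 x5 x6 : ~ ucycle incg [:: x1; x2; x3; x4; x5; x6].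
Proof.
suff pt_first P1 y2 y3 y4 y5 y6 : ~ ucycle incg [:: inl P1; y2; y3; y4; y5; y6].
  case: x1 x2 => [P1|L1] [P2|L2]; try exact: pt_first; last by rewrite /ucycle /=.
  by rewrite -(rot_ucycle 1) /=; apply: pt_first.
case: y2 y3 y4 y5 y6 => [?|L1] [P2|?] [?|L2] [P3|?] [?|L3];
  rewrite /ucycle /= ?inE -?sum_eqE /= ?orbF ?andbF //.
case/andP=> /and4P[i1 i2 i3 /and4P[i4 i5 i6 _]].
case/and5P=> /norP[p12 p13] /norP[l12 l13] p23 l23 _.
apply: (@triangle_free P1 P2 P3 L1 L2 L3).
by split; apply/and3P || apply/andP; split; rewrite // eq_sym.
Qed.

Lemma incg_girth s : ucycle incg s -> 3 <= size s -> 8 <= size s.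
Proof.
move=> cyc; have := cycle_incg_even (andP cyc).1.
case: s cyc => [|x1 [|x2 [|x3 [|x4 [|x5 [|x6 [|x7 [|x8 s]]]]]]]] //= cyc.
- by case: (incg_no_4cycle cyc).
- by case: (incg_no_6cycle cyc).
Qed.

End IncidenceGraph.

Section Quadrangle.
Local Open Scope ring_scope.

(* [x * x + x] takes the same value at [0] and [-1], hence misses some [- c]. *)
Lemma exists_anisotropic (R : finNzRingType) : exists c : R, forall x, x * x + x + c != 0.
Proof.
pose g (x : R) := - (x * x + x).
have [c cNg] : exists c, c \notin codom g.
  apply/existsP; apply: contraT; rewrite negb_exists => /forallP /= all_in.
  have /image_injP g_inj : #|codom g| == #|R|.
    by apply/eqP/eq_card => y; rewrite inE; apply/negbNE/all_in.
  have : g 0 = g (-1) by rewrite /g mulrNN mulr1 addrN mul0r addr0 oppr0.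
  by move/(g_inj 0 (-1) isT isT)/eqP; rewrite eq_sym oppr_eq0 oner_eq0.
exists c => x; apply: contra cNg => /eqP xc; apply/codomP; exists x.
by apply/eqP; rewrite -addr_eq0 addrC xc.
Qed.

Variables (F : fieldType) (c : F).
Hypothesis anisotropic : forall x : F, x * x + x + c != 0.

Definition N (u v : F) : F := u * u + u * v + c * (v * v).

Lemma N_eq0 u v : (N u v == 0) = (u == 0) && (v == 0).
Proof.
have [-> | v0] := eqVneq v 0; first by rewrite /N !(mulr0, addr0) mulf_eq0 orbb andbT.
rewrite andbF; apply: contraNF (anisotropic (u / v)) => /eqP Nuv0.
have -> : u / v * (u / v) + u / v + c = N u v / (v * v) by rewrite /N; field.
by rewrite Nuv0 mul0r.
Qed.

Definition A4 := (F * F * F * F)%type.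

(* The points of O; [None] is (0, 0, 0, 1). *)
Definition dir (p : option (F * F)) : A4 :=
  if p is Some z then (1, z.1, z.2, N z.1 z.2) else (0, 0, 0, 1).

Definition shift (a : A4) (t : F) (d : A4) : A4 :=
  (a.1.1.1 + t * d.1.1.1, a.1.1.2 + t * d.1.1.2, a.1.2 + t * d.1.2, a.2 + t * d.2).

Lemma shift0 a d : shift a 0 d = a.
Proof. by case: a => [[[a0 a1] a2] a3]; rewrite /shift /= !mul0r !addr0. Qed.

(* Coordinates of the line through [a] with direction [dir p]: [a] is moved
   along [dir p] to kill the coordinate in which [dir p] is 1. *)
Definition line_coord (a : A4) (p : option (F * F)) : F * F * F :=
  if p is Some z
  then (a.1.1.2 - a.1.1.1 * z.1, a.1.2 - a.1.1.1 * z.2, a.2 - a.1.1.1 * N z.1 z.2)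
  else (a.1.1.2, a.1.2, a.1.1.1).

Definition polarN (u v x y : F) : F := 2 * u * x + u * y + v * x + 2 * c * v * y.

(* [B (dir (Some z)) a] for any point [a] of the line [(Some z, w)], where [B] is
   the polar form of [Q x = x0 x3 - N x1 x2]: it names the hyperplane tangent
   to O at [dir (Some z)] through that line. *)
Definition tangent_coord (z : F * F) (w : F * F * F) : F :=
  w.2 - polarN z.1 z.2 w.1.1 w.1.2.

(* [Q (b - a)]; the [dir p] are exactly the isotropic directions of [Q]. *)
Definition qdist (a b : A4) : F :=
  (b.1.1.1 - a.1.1.1) * (b.2 - a.2) - N (b.1.1.2 - a.1.1.2) (b.1.2 - a.1.2).

(* [B (dir p) (dir p')] *)
Definition polar_dir (p p' : option (F * F)) : F :=
  match p, p' with
  | Some z, Some z' => N (z.1 - z'.1) (z.2 - z'.2)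
  | None, None => 0
  | _, _ => 1
  end.

Lemma polar_dir_neq0 p p' : p != p' -> polar_dir p p' != 0.
Proof.
case: p p' => [[u v]|] [[u' v']|] //= neq; rewrite ?oner_eq0 // N_eq0 !subr_eq0.
by apply: contra neq => /andP[/eqP-> /eqP->].
Qed.

Lemma qdist_shift_dir a t p : qdist a (shift a t (dir p)) = 0.
Proof. by case: a => [[[a0 a1] a2] a3]; case: p => [[u v]|]; rewrite /qdist /= /N; ring. Qed.

Lemma qdist_shift2_dir a s t p p' :
  qdist a (shift (shift a s (dir p)) t (dir p')) = s * t * polar_dir p p'.
Proof.
by case: a => [[[a0 a1] a2] a3]; case: p p' => [[u v]|] [[u' v']|];
  rewrite /qdist /= /N; ring.
Qed.

Lemma shift2_dir_neq a s t r p1 p2 p3 : p1 != p2 -> s != 0 -> t != 0 ->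
  shift (shift a s (dir p1)) t (dir p2) != shift a r (dir p3).
Proof.
move=> p12 s0 t0; apply/eqP => /(congr1 (qdist a)).
rewrite qdist_shift2_dir qdist_shift_dir; apply/eqP.
by rewrite !mulf_neq0 ?polar_dir_neq0.
Qed.

Lemma shift_dir_inj a t t' p p' : t != 0 ->
  shift a t (dir p) = shift a t' (dir p') -> p = p'.
Proof.
case: a => [[[a0 a1] a2] a3] t0 /=.
case: p p' => [[u v]|] [[u' v']|] //= [/addrI e0 /addrI e1 /addrI e2 /addrI e3].
- move: e0; rewrite !mulr1 => tt'; subst t'.
  by rewrite (mulfI t0 e1) (mulfI t0 e2).
- by move: e0 t0; rewrite mulr1 mulr0 => ->; rewrite eqxx.
- by move: e0 e3 t0; rewrite mulr1 mulr0 => <-; rewrite mul0r mulr1 => ->; rewrite eqxx.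
Qed.

Lemma line_coord_eq_shift a b p : a != b -> line_coord a p = line_coord b p ->
  exists2 t, t != 0 & b = shift a t (dir p).
Proof.
have solve (x x' y y' w : F) : x - y * w = x' - y' * w -> x' = x + (y' - y) * w.
  move=> E; have -> : x + (y' - y) * w = x - y * w + y' * w by ring.
  by rewrite E subrK.
case: a b => [[[a0 a1] a2] a3] [[[b0 b1] b2] b3] ab E.
pose t := if p is Some _ then b0 - a0 else b3 - a3.
suff eq_b : (b0, b1, b2, b3) = shift (a0, a1, a2, a3) t (dir p).
  by exists t => //; apply: contraNneq ab => t0; rewrite eq_b t0 shift0.
rewrite /shift; case: p @t E => [[u v]|] /= [e1 e2 e3].
- by congr (_, _, _, _); [ring | exact: solve e1 | exact: solve e2 | exact: solve e3].
- by rewrite -e1 -e2 -e3; congr (_, _, _, _); ring.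
Qed.

Lemma tangent_coord_shift a t p z :
  tangent_coord z (line_coord (shift a t (dir p)) (Some z)) =
  tangent_coord z (line_coord a (Some z)) + t * polar_dir p (Some z).
Proof.
case: a => [[[a0 a1] a2] a3]; case: z => u v; case: p => [[u' v']|];
  rewrite /tangent_coord /= /polarN /N; ring.
Qed.

Arguments line_coord : simpl never.
Arguments tangent_coord : simpl never.

(* Points: affine points, and pairs [(z, k)] for the hyperplanes tangent to O
   at [dir (Some z)].  Lines: affine lines [(p, line_coord a p)] with direction in
   O, and the points [inr z] of O.  The elements at [dir None] are omitted. *)
Definition Pt := (A4 + F * F * F)%type.
Definition Ln := ((option (F * F) * (F * F * F)) + F * F)%type.

Definition inc (P : Pt) (L : Ln) : bool :=
  match P, L with
  | inl a, inl (p, w) => line_coord a p == w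
  | inr (z, k), inl (Some z', w) => (z' == z) && (tangent_coord z w == k)
  | inr (z, _), inr z' => z' == z
  | _, _ => false
  end.

Lemma inc_line_unique P1 P2 L1 L2 : P1 != P2 ->
  inc P1 L1 -> inc P2 L1 -> inc P1 L2 -> inc P2 L2 -> L1 = L2.
Proof.
case: P1 P2 => [a|[z k]] [b|[z' k']]; case: L1 L2 => [[p w]|y] [[p' w']|y'] //= P12.
- move=> /eqP a1 /eqP b1 /eqP a2 /eqP b2.
  have [t t0 eb] := line_coord_eq_shift P12 (etrans a1 (esym b1)).
  have [t' _ eb'] := line_coord_eq_shift P12 (etrans a2 (esym b2)).
  have pp' := shift_dir_inj t0 (etrans (esym eb) eb'); subst p'.
  by rewrite -a1 -a2.
- case: p p' => [z1|] [z2|] //= /eqP a1 /andP[/eqP e1 _] /eqP a2 /andP[/eqP e2 _].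
  by rewrite -a1 -a2 e1 e2.
- case: p p' => [z1|] [z2|] //= /andP[/eqP e1 _] /eqP b1 /andP[/eqP e2 _] /eqP b2.
  by rewrite -b1 -b2 e1 e2.
- case: p p' => [z1|] [z2|] //= /andP[/eqP e1 /eqP k1] /andP[/eqP e2 /eqP k2] _ _.
  by move: P12; rewrite -k1 -k2 -e1 -e2 eqxx.
- case: p => [z1|] //= /andP[/eqP e1 /eqP k1] /andP[/eqP e2 /eqP k2] _ _.
  by move: P12; rewrite -k1 -k2 -e1 -e2 eqxx.
- case: p' => [z1|] //= _ _ /andP[/eqP e1 /eqP k1] /andP[/eqP e2 /eqP k2].
  by move: P12; rewrite -k1 -k2 -e1 -e2 eqxx.
- by move=> /eqP-> _ /eqP-> _.
Qed.

Lemma inc_affine_tangent a z k L :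
  inc (inl a) L -> inc (inr (z, k)) L -> L = inl (Some z, line_coord a (Some z)).
Proof. by case: L => [[[z'|] w]|?] //= /eqP <- /andP[/eqP -> _]. Qed.

Lemma inc_two_tangents s s' L : s != s' -> inc (inr s) L -> inc (inr s') L ->
  L = inr s.1 /\ s'.1 = s.1.
Proof.
case: s s' => z k [z' k']; case: L => [[[y|] w]|y] //= ss'.
- move=> /andP[/eqP e /eqP kw] /andP[/eqP e' /eqP kw']; subst y z'.
  by move: ss'; rewrite -kw -kw' eqxx.
- by move=> /eqP <- /eqP.
Qed.

Lemma no_triangle_affine3 a b d L1 L2 L3 : ~ triangle inc (inl a) (inl b) (inl d) L1 L2 L3.
Proof.
case=> /and3P[ab bd da] /and3P[L12 _ _].
case: L1 L2 L3 L12 => [[p1 w1]|?] [[p2 w2]|?] [[p3 w3]|?] //= L12.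
move=> /andP[/eqP a1 /eqP b1] /andP[/eqP b2 /eqP d2] /andP[/eqP d3 /eqP a3].
have p12 : p1 != p2 by apply: contraNneq L12 => e12; rewrite -b1 -b2 e12 eqxx.
have [t1 t10 eb] := line_coord_eq_shift ab (etrans a1 (esym b1)).
have [t2 t20 ed] := line_coord_eq_shift bd (etrans b2 (esym d2)).
rewrite eq_sym in da; have [t3 _ ed'] := line_coord_eq_shift da (etrans a3 (esym d3)).
by move: (shift2_dir_neq a t3 p3 p12 t10 t20); rewrite -eb -ed -ed' eqxx.
Qed.

Lemma no_triangle_affine2 a b s L1 L2 L3 : ~ triangle inc (inl a) (inl b) (inr s) L1 L2 L3.
Proof.
case: s => z k; case=> /and3P[ab _ _] /and3P[_ _ L31].
case: L1 L2 L3 L31 => [[p1 w1]|?] [[[z2|] w2]|?] [[[z3|] w3]|?] //= L31;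
  rewrite ?andbF //.
move=> /andP[/eqP a1 /eqP b1] /andP[/eqP b2 /andP[/eqP e2 /eqP k2]].
move=> /andP[/andP[/eqP e3 /eqP k3] /eqP a3]; subst z2 z3.
have [t t0 eb] := line_coord_eq_shift ab (etrans a1 (esym b1)).
have p1z : p1 != Some z by apply: contraNneq L31 => e; rewrite -a1 -a3 e eqxx.
move: k2; rewrite -b2 eb tangent_coord_shift a3 k3 -{2}[k]addr0 => /addrI /eqP.
by apply/negP; rewrite mulf_neq0 ?polar_dir_neq0.
Qed.

Lemma no_triangle_affine1 a s1 s2 L1 L2 L3 :
  ~ triangle inc (inl a) (inr s1) (inr s2) L1 L2 L3.
Proof.
case: s1 s2 => z k [z' k']; case=> /and3P[_ s12 _] /and3P[_ _ L31].
case=> /andP[a1 s1] /andP[s1' s2] /andP[s2' a3].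
have [_ /= ez] := inc_two_tangents s12 s1' s2.
move: L31; rewrite (inc_affine_tangent a1 s1) (inc_affine_tangent a3 s2') ez.
by rewrite eqxx.
Qed.

Lemma no_triangle_affine0 s1 s2 s3 L1 L2 L3 :
  ~ triangle inc (inr s1) (inr s2) (inr s3) L1 L2 L3.
Proof.
case=> /and3P[s12 s23 _] /and3P[L12 _ _] /andP[i1 i2] /andP[i2' i3] _.
have [E1 e12] := inc_two_tangents s12 i1 i2; have [E2 _] := inc_two_tangents s23 i2' i3.
by move: L12; rewrite E1 E2 e12 eqxx.
Qed.

Lemma inc_triangle_free P1 P2 P3 L1 L2 L3 : ~ triangle inc P1 P2 P3 L1 L2 L3.
Proof.
case: P1 P2 P3 => [a|s1] [b|s2] [d|s3].
- exact: no_triangle_affine3.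
- exact: no_triangle_affine2.
- by move/triangle_rot/triangle_rot; apply: no_triangle_affine2.
- exact: no_triangle_affine1.
- by move/triangle_rot; apply: no_triangle_affine2.
- by move/triangle_rot; apply: no_triangle_affine1.
- by move/triangle_rot/triangle_rot; apply: no_triangle_affine1.
- exact: no_triangle_affine0.
Qed.

End Quadrangle.

Section HyperplaneDeleted.
Local Open Scope ring_scope.
Variables (F : finFieldType) (c : F).
Hypothesis anisotropic : forall x : F, x * x + x + c != 0.

(* The elements that survive the deletion; [Fx] holds the nonzero [x2]-coordinate
   of a point, of a tangency point, of a direction, or of the points of a line
   parallel to [x2 = 0] (whose direction [Some (u, 0)] or [None] is an [option F]). *)
Definition Fx := {x : F | x != 0}.
Definition OffPt := (F * F * Fx * F)%type.
Definition OffTangent := (F * Fx * F)%type.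
Definition TransLn := (F * Fx * (F * F * F))%type.
Definition ParLn := (option F * (F * Fx * F))%type.
Definition OffOvoid := (F * Fx)%type.
Definition Vertex := ((OffPt + OffTangent) + ((TransLn + ParLn) + OffOvoid))%type.

Definition embed (x : Vertex) : Pt F + Ln F :=
  match x with
  | inl (inl a) => inl (inl (a.1.1.1, a.1.1.2, val a.1.2, a.2))
  | inl (inr s) => inl (inr (s.1.1, val s.1.2, s.2))
  | inr (inl (inl l)) => inr (inl (Some (l.1.1, val l.1.2), l.2))
  | inr (inl (inr l)) =>
      inr (inl (omap (fun u => (u, 0)) l.1, (l.2.1.1, val l.2.1.2, l.2.2)))
  | inr (inr z) => inr (inr (z.1, val z.2))
  end.

Definition adj : rel Vertex := relpre embed (incg (inc c)).

Lemma card_F_gt0 : (0 < #|F|)%N.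
Proof. by apply/card_gt0P; exists 0. Qed.

Lemma card_Fx : #|{: Fx}| = #|F|.-1.
Proof. by rewrite card_sig cardC1. Qed.

Lemma embed_inj : injective embed.
Proof.
case=> [[[[[a0 a1] a2] a3]|[[u v] k]]|[[[[u v] w]|[o [[w1 w2] w3]]]|[u v]]];
case=> [[[[[b0 b1] b2] b3]|[[u' v'] k']]|[[[[u' v'] w']|[o' [[w1' w2'] w3']]]|[u' v']]] //=.
- by case=> -> -> /val_inj -> ->.
- by case=> -> /val_inj -> ->.
- by case=> -> /val_inj -> ->.
- by case: o' => [x|] //= [_ v0]; move: (valP v) => /=; rewrite v0 eqxx.
- by case: o => [x|] //= [_ v0]; move: (valP v') => /=; rewrite -v0 eqxx.
- case: o o' => [x|] [y|] //=; first by case=> -> -> /val_inj -> ->.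
  by case=> -> /val_inj -> ->.
- by case=> -> /val_inj ->.
Qed.

Lemma deg_OffPt (a : OffPt) : deg adj (inl (inl a)) = #|{: (F * Fx) + option F}|.
Proof.
case: a => [[[a0 a1] a2] a3].
pose A : A4 F := (a0, a1, val a2, a3).
pose f (i : ((F * Fx) + option F)%type) : Vertex :=
  match i with
  | inl uv => inr (inl (inl (uv, line_coord c A (Some (uv.1, val uv.2)))))
  | inr o => inr (inl (inr (o, (if o is Some u then a1 - a0 * u else a1, a2,
                               if o is Some u then a3 - a0 * N c u 0 else a0))))
  end.
apply: (deg_param (f := f)).
- case=> [[u v]|o] [[u' v']|o'] //=.
  + by case=> -> ->.
  + by case=> ->.
- case=> [[u v]|[u|]]; rewrite /adj /= ?eqxx //.
  by rewrite /line_coord /= mulr0 subr0 eqxx.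
- case=> [[p|p]|[[l|l]|l]]; rewrite /adj //=.
  + by case: l => [[u v] w] /= /eqP E; exists (inl (u, v)); rewrite -E.
  + case: l => [[u|] [[w1 w2] w3]]; rewrite /line_coord /= => /eqP [E1 E2 E3].
    * exists (inr (Some u)); rewrite /= E1 E3; congr (inr (inl (inr (_, (_, _, _))))).
      by apply: val_inj; rewrite /= -E2 mulr0 subr0.
    * exists (inr None); rewrite /= E1 E3; congr (inr (inl (inr (_, (_, _, _))))).
      by apply: val_inj; rewrite /= -E2.
Qed.

Lemma deg_OffTangent (s : OffTangent) : deg adj (inl (inr s)) = #|{: option (F * F)}|.
Proof.
case: s => [[u v] k].
pose f (i : option (F * F)) : Vertex :=
  match i with
  | Some w => inr (inl (inl ((u, v), (w.1, w.2, k + polarN c u (val v) w.1 w.2))))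
  | None => inr (inr (u, v))
  end.
apply: (deg_param (f := f)).
- case=> [[w1 w2]|] [[w1' w2']|] //=.
  by case=> -> ->.
- case=> [[w1 w2]|]; rewrite /adj /= ?eqxx //=.
  by rewrite /tangent_coord /= addrK eqxx.
- case=> [[q|q]|[[l|l]|l]]; rewrite /adj //=.
  + case: l => [[u' v'] [[w1 w2] w3]] /= /andP[/eqP [E1 E2] /eqP E3].
    exists (Some (w1, w2)); rewrite /= E1 (val_inj E2) -E3 /tangent_coord /=.
    by congr (inr (inl (inl (_, (_, _, _))))); rewrite subrK.
  + case: l => [[u'|] [[w1 w2] w3]] //= /andP[/eqP [E1 E2] _].
    by move: (valP v) => /=; rewrite -E2 eqxx.
  + case: l => u' v' /= /eqP [E1 E2]; exists None.
    by rewrite /= E1 (val_inj E2).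
Qed.

Lemma deg_OffOvoid (z : OffOvoid) : deg adj (inr (inr z)) = #|{: F}|.
Proof.
case: z => u v.
apply: (deg_param (f := fun k : F => inl (inr ((u, v), k)))).
- by move=> k k' [].
- by move=> k; rewrite /adj /= eqxx.
- case=> [[q|q]|[[l|l]|l]]; rewrite /adj //=.
  case: q => [[u' v'] k] /= /eqP [E1 E2]; exists k.
  by rewrite -E1 (val_inj E2).
Qed.

Lemma deg_ParLn (l : ParLn) : deg adj (inr (inl (inr l))) = #|{: F}|.
Proof.
case: l => [o [[w1 w2] w3]].
pose f (t : F) : Vertex := inl (inl (if o is Some u
   then (t, w1 + t * u, w2, w3 + t * N c u 0) else (w3, w1, w2, t))).
apply: (deg_param (f := f)).
- by move=> t t'; rewrite /f; clear f; case: o => [u|] [].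
- move=> t; rewrite /adj /f; clear f; case: o => [u|] /=; rewrite /line_coord /= ?eqxx //.
  by apply/eqP; congr (_, _, _); ring.
- case=> [[q|q]|[[l|l]|l]]; rewrite /adj //=.
  + case: q => [[[a0 a1] a2] a3]; rewrite /f; clear f; case: o => [u|];
      rewrite /line_coord /= => /eqP [E1 E2 E3].
    * exists a0; rewrite -E1 -E3; congr (inl (inl (_, _, _, _))).
      - ring.
      - by apply: val_inj; rewrite /= -E2 mulr0 subr0.
      - ring.
    * exists a3; rewrite -E1 -E3; congr (inl (inl (_, _, _, _))).
      by apply: val_inj; rewrite /= -E2.
  + case: q => [[u' v'] k]; rewrite /f; clear f; case: o => [u|] //= /andP[/eqP [E1 E2] _].
    by move: (valP v') => /=; rewrite -E2 eqxx.
Qed.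

Lemma deg_TransLn (l : TransLn) : deg adj (inr (inl (inl l))) = #|{: option Fx}|.
Proof.
case: l => [[u v] [[w1 w2] w3]].
have v0 : val v != 0 := valP v.
pose f (i : option Fx) : Vertex :=
  match i with
  | Some s => let t := (val s - w2) / val v in
              inl (inl (t, w1 + t * u, s, w3 + t * N c u (val v)))
  | None => inl (inr ((u, v), tangent_coord c (u, val v) (w1, w2, w3)))
  end.
apply: (deg_param (f := f)).
- by case=> [s|] [s'|] //= [_ _ ->].
- case=> [s|]; rewrite /adj /= ?eqxx //.
  apply/eqP; rewrite /line_coord /=; congr (_, _, _); [ring | | ring].
  by rewrite divfK // subKr.
- case=> [[q|q]|[[l|l]|l]]; rewrite /adj //=.
  + case: q => [[[a0 a1] a2] a3]; rewrite /line_coord /= => /eqP [E1 E2 E3].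
    exists (Some a2) => /=.
    have ha0 : a0 = (val a2 - w2) / val v by rewrite -E2 opprB addrC subrK mulfK.
    rewrite -ha0 -E1 -E3; congr (inl (inl (_, _, _, _))); ring.
  + case: q => [[u' v'] k] /= /andP[/eqP [E1 E2] /eqP E3]; exists None.
    by rewrite /= -E3 E1 (val_inj E2).
Qed.

Lemma card_Vertex : #|{: Vertex}| = ((#|F| ^ 2 + #|F| + 1) * (#|F| ^ 3 - #|F|))%N.
Proof.
rewrite !card_sum !card_prod card_option card_Fx.
by case: #|F| card_F_gt0 => // q _ /=; rewrite !expnS expn0; nia.
Qed.

Lemma adj_8cycle : exists s, is_cycle adj s /\ size s = 8%N.
Proof.
(* A parallelogram with sides along (1, 0, 0, 0) and (0, 0, 0, 1). *)
pose one : Fx := exist _ 1 (oner_neq0 F).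
pose pt (x0 x3 : F) : Vertex := inl (inl (x0, 0, one, x3)).
pose ln (p : option F) (x : F) : Vertex := inr (inl (inr (p, (0, one, x)))).
exists [:: pt 0 0; ln (Some 0) 0; pt 1 0; ln None 1; pt 1 1; ln (Some 0) 1; pt 0 1; ln None 0].
split=> //; split=> //; apply/andP; split.
  by rewrite /= /adj /= /line_coord /= /N !(mulr0, mul0r, subr0, addr0, mulr1, mul1r, eqxx).
pose key (x : Vertex) : bool * bool * bool :=
  match x with
  | inl (inl a) => (true, a.1.1.1 == 0, a.2 == 0)
  | inr (inl (inr l)) => (false, isSome l.1, l.2.2 == 0)
  | _ => (false, false, false)
  end.
by apply: (map_uniq (f := key)); rewrite /= !eqxx oner_eq0.
Qed.

Lemma adj_girth s : is_cycle adj s -> (8 <= size s)%N.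
Proof.
case=> s3 /andP[cyc s_uniq]; rewrite -(size_map embed).
apply: (incg_girth (@inc_line_unique F c) (inc_triangle_free anisotropic)).
  by rewrite /ucycle cycle_map cyc map_inj_uniq //; exact: embed_inj.
by rewrite size_map.
Qed.

Lemma adj_bipartite_biregular : bipartite_biregular adj #|F| (#|F| ^ 2 + 1) 8.
Proof.
split; first by split=> [x y | x]; [exact: incg_sym | exact: incg_irr].
exists [set x | ~~ is_point (embed x)]; split; [|split; [|split]].
- by move=> x y /incg_is_point; rewrite !inE => ->; case: is_point.
- case=> [[a|s]|[[l|l]|z]]; rewrite inE //= => _.
  + by rewrite deg_TransLn card_option card_Fx prednK ?card_F_gt0.
  + by rewrite deg_ParLn.
  + by rewrite deg_OffOvoid.
- case=> [[a|s]|[[l|l]|z]]; rewrite inE //= => _.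
  + rewrite deg_OffPt card_sum card_prod card_option card_Fx.
    by case: #|F| card_F_gt0 => // q _ /=; rewrite expnS expn1; nia.
  + by rewrite deg_OffTangent card_option card_prod expnS expn1 addn1.
- by split; [exact: adj_8cycle | exact: adj_girth].
Qed.

End HyperplaneDeleted.

Theorem mainTheorem10 (q : nat) :
  prime_power q ->
  exists (V : finType) (e : rel V),
    bipartite_biregular e q (q ^ 2 + 1) 8 /\
    #|V| = (q ^ 2 + q + 1) * (q ^ 3 - q).
Proof.
case=> p [k [p_prime [k_gt0 ->]]].
have [F _ cardF] := pPrimePowerField p_prime k_gt0.
have [c anisotropic] := exists_anisotropic F.
exists (Vertex F), (adj c); rewrite -cardF.
by split; [exact: adj_bipartite_biregular anisotropic | exact: card_Vertex].
Qed.
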